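(* Let $A,B\in\mathrm{SL}_2\mathbb{Z}$ be noncommuting, well oriented, with $2\le\mathrm{tr}(A)<\mathrm{tr}(B)$. For every $n\ge1$, any word $w$ of length $n$ such that $[w]$ is maximal among the values $[u]$ for words $u$ of length $n$ does not contain the factor $a^2$.
   Context: Words are finite strings over $\{a,b\}$; a factor is a contiguous subword; $\phi$ is the homomorphism with $\phi(a)=A,\phi(b)=B$, and $[w]=\mathrm{tr}(\phi(w))$. Fixed points are for the Möbius action on $\partial\mathcal{H}=\mathbb{P}^1\mathbb{R}$; $\alpha^\pm$ ($\beta^\pm$) are the attracting/repelling fixed points of $A$ ($B$), both equal to the unique fixed point if parabolic. With $\partial\mathcal{H}$ cyclically ordered and $[\alpha,\beta]$ the closed counterclockwise interval from $\alpha$ to $\beta$, let $I^+=\{\alpha^+\}$ if $\alpha^+=\beta^+$, and otherwise the one of $[\alpha^+,\beta^+],[\beta^+,\alpha^+]$ mapped into itself by both $A$ and $B$ (if it exists); define $I^-$ likewise with $A^{-1},B^{-1},\alpha^-,\beta^-$. The pair is coherently oriented if both exist, and well oriented if $A,B$ is coherently oriented but $A,B^{-1}$ is not. *)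

From HB Require Import structures.
From mathcomp Require Import all_boot all_order all_algebra.
From mathcomp Require Import reals Rstruct.
Set Implicit Arguments. Unset Strict Implicit. Unset Printing Implicit Defensive.
Import Order.TTheory GRing.Theory Num.Theory.
Local Open Scope ring_scope.

Definition word := seq bool.
Definition la : bool := false.
Definition lb : bool := true.

Definition phi (A B : 'M[int]_2) (w : word) : 'M[int]_2 :=
  foldr (fun c M => (if c then B else A) *m M) 1%:M w.

Definition trw (A B : 'M[int]_2) (w : word) : int := \tr (phi A B w).

(* ---------- The boundary of H: P^1(R) = R u {oo}, oo encoded by None ---------- *)
Section P1.
Variable R : realFieldType.

Definition P1 := option R.

Definition mob (M : 'M[R]_2) (p : P1) : P1 :=
  match p with
  | Some x => let den := M 1 0 * x + M 1 1 in
              if den == 0 then None else Some ((M 0 0 * x + M 0 1) / den)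
  | None => if M 1 0 == 0 then None else Some (M 0 0 / M 1 0)
  end.

Definition proj (v : 'cV[R]_2) : P1 :=
  if v 1 0 == 0 then None else Some (v 0 0 / v 1 0).

(* Attracting fixed point: the line of an eigenvector whose eigenvalue has
   maximal absolute value; repelling: minimal absolute value. For a parabolic
   matrix both are the unique fixed point. *)
Definition attracting (M : 'M[R]_2) (p : P1) : Prop :=
  exists (v : 'cV[R]_2) (l : R), [/\ v != 0, M *m v = l *: v, p = proj v &
    forall (w : 'cV[R]_2) (m : R), w != 0 -> M *m w = m *: w -> `|m| <= `|l|].

Definition repelling (M : 'M[R]_2) (p : P1) : Prop :=
  exists (v : 'cV[R]_2) (l : R), [/\ v != 0, M *m v = l *: v, p = proj v &
    forall (w : 'cV[R]_2) (m : R), w != 0 -> M *m w = m *: w -> `|l| <= `|m|].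

(* Closed counterclockwise interval [p, q] of P^1(R) (orientation of R u {oo}
   as the boundary of the upper half-plane: increasing on R). *)
Definition ccw_int (p q : P1) (x : P1) : bool :=
  match p, q with
  | Some a, Some b =>
      if a <= b then (if x is Some y then (a <= y) && (y <= b) else false)
      else (if x is Some y then (a <= y) || (y <= b) else true)
  | Some a, None => if x is Some y then a <= y else true
  | None, Some b => if x is Some y then y <= b else true
  | None, None => x == None
  end.

Definition maps_into_itself (M : 'M[R]_2) (I : P1 -> bool) : Prop :=
  forall x, I x -> I (mob M x).

Definition interval_exists (M N : 'M[R]_2) (p q : P1) : Prop :=
  p = q \/
  (maps_into_itself M (ccw_int p q) /\ maps_into_itself N (ccw_int p q)) \/
  (maps_into_itself M (ccw_int q p) /\ maps_into_itself N (ccw_int q p)).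

Definition coherently_oriented (M N : 'M[R]_2) : Prop :=
  exists ap am bp bm : P1,
    [/\ attracting M ap, repelling M am, attracting N bp & repelling N bm] /\
    interval_exists M N ap bp /\
    interval_exists (invmx M) (invmx N) am bm.

Definition well_oriented (M N : 'M[R]_2) : Prop :=
  coherently_oriented M N /\ ~ coherently_oriented M (invmx N).

End P1.

Definition toR (M : 'M[int]_2) : 'M[Rdefinitions.R]_2 := map_mx intr M.

From HB Require Import structures.
From mathcomp Require Import all_boot all_order all_algebra.
From mathcomp Require Import reals Rstruct.
From mathcomp Require Import ring lra zify.
Import Order.TTheory GRing.Theory Num.Theory.
Local Open Scope ring_scope.
Set Implicit Arguments. Unset Strict Implicit. Unset Printing Implicit Defensive.

(* Suppose w = w1 a a w2 maximizes the trace and put u = w1 b a w2. By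
   cyclicity, [u] - [w] = tr((B - A) A W) with W = phi(w2 w1). Let p and q be
   the repelling eigenvectors of A and B, with eigenvalues 1/l and 1/m. Since
   (A, B^-1) is not coherently oriented, p and q are independent and, after
   normalising q, A and B are triangular in the basis (p, q) with off-diagonal
   entries x, y > 0 and x y > (l - 1/l)(m - 1/m): otherwise the eigenvectors
   would exhibit both intervals I^+ and I^- of (A, B^-1). Integrality of the
   traces improves this to x y >= l^2 - l/m, which makes (B - A) A, like A, B
   and W, a matrix with nonnegative coordinates in (p, q) and positive
   (p, p)-coordinate. Such matrices form a monoid of matrices with positive
   trace, so [u] > [w]. *)

Section Mx2.
Variable R : comPzRingType.
Implicit Types (M : 'M[R]_2) (u v w P Q : 'cV[R]_2).

Lemma ord2P (i : 'I_2) : i = 0 \/ i = 1.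
Proof. by case: i => [[|[|//]] hi]; [left|right]; apply/val_inj. Qed.

Lemma lift_ord2 (h : 'I_2) (i : 'I_1) : lift h i = if val h == 0%N then 1 else 0.
Proof. by case: (ord2P h) => ->; rewrite (ord1 i); apply/val_inj. Qed.

Lemma det_mx2 M : \det M = M 0 0 * M 1 1 - M 0 1 * M 1 0.
Proof.
rewrite (expand_det_row _ 0) !big_ord_recl big_ord0 /cofactor !det_mx11 !mxE /=.
rewrite !lift_ord2 /= expr0 expr1; ring.
Qed.

Lemma mxtrace_mx2 M : \tr M = M 0 0 + M 1 1.
Proof. by rewrite /mxtrace !big_ord_recl big_ord0 addr0 !lift_ord2. Qed.

Lemma mulmx_col2 M v i : (M *m v) i 0 = M i 0 * v 0 0 + M i 1 * v 1 0.
Proof. by rewrite !mxE !big_ord_recl big_ord0 addr0 !lift_ord2. Qed.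

Lemma mx2P (M N : 'M[R]_2) :
  M 0 0 = N 0 0 -> M 0 1 = N 0 1 -> M 1 0 = N 1 0 -> M 1 1 = N 1 1 -> M = N.
Proof.
move=> h00 h01 h10 h11; apply/matrixP => i j.
by case: (ord2P i) => ->; case: (ord2P j) => ->.
Qed.

Lemma col2P v w : v 0 0 = w 0 0 -> v 1 0 = w 1 0 -> v = w.
Proof.
by move=> h0 h1; apply/matrixP => i j; rewrite (ord1 j); case: (ord2P i) => ->.
Qed.

Lemma col2_eq0 v : (v == 0) = (v 0 0 == 0) && (v 1 0 == 0).
Proof.
apply/eqP/andP => [->|[/eqP h0 /eqP h1]]; first by rewrite !mxE.
by apply: col2P; rewrite mxE.
Qed.

Definition col2 (a b : R) : 'cV[R]_2 := \col_i (if val i == 0%N then a else b).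

(* Minus the determinant of the columns [v] and [w]: this sign makes
   [ccw_int_proj] below sign-free. *)
Definition wedge v w := v 1 0 * w 0 0 - v 0 0 * w 1 0.

Lemma wedgeC v w : wedge v w = - wedge w v.
Proof. rewrite /wedge; ring. Qed.

Lemma wedgevv v : wedge v v = 0.
Proof. rewrite /wedge; ring. Qed.

Lemma wedge_combl a b P Q w : wedge (a *: P + b *: Q) w = a * wedge P w + b * wedge Q w.
Proof. rewrite /wedge !mxE; ring. Qed.

Lemma wedge_combr a b P Q w : wedge w (a *: P + b *: Q) = a * wedge w P + b * wedge w Q.
Proof. rewrite /wedge !mxE; ring. Qed.

Lemma wedgeZl a v w : wedge (a *: v) w = a * wedge v w.
Proof. rewrite /wedge !mxE; ring. Qed.

Lemma wedgeZr a v w : wedge v (a *: w) = a * wedge v w.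
Proof. rewrite /wedge !mxE; ring. Qed.

Lemma wedgeNr v w : wedge v (- w) = - wedge v w.
Proof. rewrite /wedge !mxE; ring. Qed.

Lemma wedge0l w : wedge 0 w = 0.
Proof. rewrite /wedge !mxE; ring. Qed.

Lemma wedge0r w : wedge w 0 = 0.
Proof. rewrite /wedge !mxE; ring. Qed.

Lemma wedge_mulmx M v w : wedge (M *m v) (M *m w) = \det M * wedge v w.
Proof. rewrite /wedge !mulmx_col2 det_mx2; ring. Qed.

Lemma mxtrace_wedge M P Q :
  \tr M * wedge P Q = wedge (M *m P) Q + wedge P (M *m Q).
Proof. rewrite mxtrace_mx2 /wedge !mulmx_col2; ring. Qed.

Lemma triangular_eigenvector M P Q a c x :
  M *m P = c *: P -> M *m Q = x *: P + a *: Q ->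
  M *m (x *: P + (a - c) *: Q) = a *: (x *: P + (a - c) *: Q).
Proof.
move=> hP hQ; rewrite mulmxDr -!scalemxAr hP hQ.
by apply: col2P; rewrite !mxE; ring.
Qed.

Lemma mxtrace_adj_mx2 M : \tr (\adj M) = \tr M.
Proof. by rewrite !mxtrace_mx2 !mxE /cofactor !det_mx11 !mxE /= !lift_ord2 /=; ring. Qed.

End Mx2.

Section Mx2Field.
Variable F : fieldType.
Implicit Types (M : 'M[F]_2) (u v w P Q : 'cV[F]_2).

Lemma col2_decomp P Q w : wedge P Q != 0 ->
  w = (wedge w Q / wedge P Q) *: P + (wedge P w / wedge P Q) *: Q.
Proof. by move=> hPQ; apply: col2P; rewrite !mxE /wedge; field. Qed.

Lemma exists_wedge_neq0 v : v != 0 -> exists w, wedge v w != 0.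
Proof.
rewrite col2_eq0 negb_and => /orP [h0|h1].
  exists (col2 0 1); rewrite /wedge !mxE /=.
  by rewrite mulr0 mulr1 sub0r oppr_eq0.
by exists (col2 1 0); rewrite /wedge !mxE /= mulr0 mulr1 subr0.
Qed.

Lemma wedge_eq0_scale v w : wedge v w = 0 -> w != 0 -> exists k, v = k *: w.
Proof.
rewrite /wedge => /eqP; rewrite subr_eq0 => /eqP e; rewrite col2_eq0 negb_and.
case/orP => hw.
  exists (v 0 0 / w 0 0); apply: col2P; rewrite !mxE; first by field.
  by apply: (mulIf hw); rewrite e; field.
exists (v 1 0 / w 1 0); apply: col2P; rewrite !mxE; last by field.
by apply: (mulIf hw); rewrite -e; field.
Qed.

Lemma wedge_neq0l v w : wedge v w != 0 -> v != 0.
Proof. by apply: contraNneq => ->; rewrite wedge0l. Qed.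

Lemma wedge_neq0r v w : wedge v w != 0 -> w != 0.
Proof. by apply: contraNneq => ->; rewrite wedge0r. Qed.

Lemma mxtrace_basis M P Q a b c d : wedge P Q != 0 ->
  M *m P = a *: P + b *: Q -> M *m Q = c *: P + d *: Q -> \tr M = a + d.
Proof.
move=> hPQ hP hQ; apply: (mulIf hPQ).
by rewrite mxtrace_wedge hP hQ wedge_combl wedge_combr !wedgevv; ring.
Qed.

Lemma scalar_mx_basis M P Q a : wedge P Q != 0 ->
  M *m P = a *: P -> M *m Q = a *: Q -> M = a%:M.
Proof.
move=> hPQ hP hQ; apply/matrixP => i j.
pose e : 'cV[F]_2 := delta_mx j 0; have hj := col2_decomp e hPQ.
have : M *m e = a *: e.
  by rewrite [in LHS]hj [in RHS]hj mulmxDr -!scalemxAr hP hQ; apply: col2P; rewrite !mxE; ring.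
by rewrite /e -colE => /matrixP /(_ i 0); rewrite !mxE andbT mulr_natr.
Qed.

Lemma eigenvalue_root M v l : v != 0 -> M *m v = l *: v ->
  l ^+ 2 - \tr M * l + \det M = 0.
Proof.
move=> /exists_wedge_neq0 [w hvw] hv.
set b := wedge (M *m w) w / wedge v w; set d := wedge v (M *m w) / wedge v w.
have hw : M *m w = b *: v + d *: w := col2_decomp _ hvw.
have hv' : M *m v = l *: v + 0 *: w by rewrite scale0r addr0.
have -> : \tr M = l + d := mxtrace_basis hvw hv' hw.
have : \det M * wedge v w = l * d * wedge v w.
  by rewrite -wedge_mulmx hv hw wedgeZl wedge_combr wedgevv; ring.
by move/(mulIf hvw) ->; ring.
Qed.

Lemma root_eigenvector M l : l ^+ 2 - \tr M * l + \det M = 0 ->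
  M = l%:M \/ exists2 v : 'cV_2, v != 0 & M *m v = l *: v.
Proof.
rewrite mxtrace_mx2 det_mx2 => hl.
(* The columns of [\adj (l%:M - M)] are killed by [l%:M - M]; both vanish only
   if [M = l%:M]. *)
have char_eq (x y : F) : x - y = - (l ^+ 2 - (M 0 0 + M 1 1) * l +
    (M 0 0 * M 1 1 - M 0 1 * M 1 0)) -> x = y.
  by rewrite hl oppr0 => /eqP; rewrite subr_eq0 => /eqP.
have [h1|h1] := eqVneq (col2 (M 0 1) (l - M 0 0)) 0; last first.
  right; exists (col2 (M 0 1) (l - M 0 0)) => //.
  by apply: col2P; rewrite mulmx_col2 !mxE /=; [ring | apply: char_eq; ring].
have [h2|h2] := eqVneq (col2 (l - M 1 1) (M 1 0)) 0; last first.
  right; exists (col2 (l - M 1 1) (M 1 0)) => //.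
  by apply: col2P; rewrite mulmx_col2 !mxE /=; [apply: char_eq; ring | ring].
move/eqP: h1; move/eqP: h2; rewrite !col2_eq0 !mxE /= !subr_eq0.
by case/andP => /eqP h11 /eqP h10 /andP [/eqP h01 /eqP h00]; left; apply: mx2P; rewrite !mxE.
Qed.

Lemma det1_triangular M P Q a : \det M = 1 -> a != 0 -> wedge P Q != 0 ->
  M *m P = a *: P -> exists c, M *m Q = c *: P + a^-1 *: Q.
Proof.
move=> hM ha hPQ hP; have hQ := col2_decomp (M *m Q) hPQ.
exists (wedge (M *m Q) Q / wedge P Q); rewrite [LHS]hQ; congr (_ + _ *: _).
apply: (mulfI ha); rewrite mulfV //; apply: (mulIf hPQ).
by rewrite mul1r mulrA divfK // -wedgeZl -hP wedge_mulmx hM mul1r.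
Qed.

Lemma invmx_eigen M v a : M \in unitmx -> a != 0 ->
  M *m v = a *: v -> invmx M *m v = a^-1 *: v.
Proof.
move=> hM ha hv; have := mulKmx hM v; rewrite hv -scalemxAr => hv'.
by rewrite -{2}hv' scalerA mulVf // scale1r.
Qed.

Lemma mxtrace_invmx_det1 M : \det M = 1 -> \tr (invmx M) = \tr M.
Proof. by move=> hM; rewrite /invmx unitmxE hM unitr1 invr1 scale1r mxtrace_adj_mx2. Qed.

End Mx2Field.

Section ProjectiveLine.
Variable R : realFieldType.
Implicit Types (M : 'M[R]_2) (u v w P Q : 'cV[R]_2) (x y z : P1 R).

Definition homog x : 'cV[R]_2 := if x is Some a then col2 a 1 else col2 1 0.

Lemma homog_neq0 x : homog x != 0.
Proof. by rewrite col2_eq0; case: x => [a|]; rewrite !mxE /= oner_eq0 ?andbF. Qed.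

Lemma proj_homog x : proj (homog x) = x.
Proof. by case: x => [a|]; rewrite /proj !mxE /= ?oner_eq0 ?divr1 ?eqxx. Qed.

Lemma projZ k v : k != 0 -> proj (k *: v) = proj v.
Proof.
move=> hk; rewrite /proj !mxE mulf_eq0 (negbTE hk) /=.
by have [//|h] := eqVneq (v 1 0) 0; rewrite invfM mulrACA mulfV ?mul1r.
Qed.

Lemma homog_proj v : v != 0 -> exists2 k, k != 0 & v = k *: homog (proj v).
Proof.
rewrite col2_eq0 /proj; have [h1|h1] := eqVneq (v 1 0) 0 => /= hv.
  by rewrite andbT in hv; exists (v 0 0) => //; apply: col2P; rewrite !mxE /= ?h1; ring.
by exists (v 1 0) => //; apply: col2P; rewrite !mxE /=; field.
Qed.

Lemma mob_proj M v : v != 0 -> mob M (proj v) = proj (M *m v).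
Proof.
move=> hv; have [k hk ->] := homog_proj hv; rewrite projZ // proj_homog.
rewrite -scalemxAr projZ //.
by case: (proj v) => [a|]; rewrite /mob /proj !mulmx_col2 !mxE /= !mulr1 ?mulr0 ?addr0.
Qed.

Lemma ccw_int_homog x y z : x != y ->
  ccw_int x y z = (0 <= wedge (homog x) (homog y) *
                        (wedge (homog x) (homog z) * wedge (homog z) (homog y))).
Proof.
case: x y z => [a|] [b|] [c|] //= hab.
all: rewrite /wedge !mxE /= !(mulr1, mul1r, mulr0, mul0r, subr0, sub0r).
- have {hab} : a != b by apply: contraNneq hab => ->.
  case: ltgtP => // hab _.
    rewrite pmulr_rge0 ?subr_gt0 //; apply/andP/idP => [[]|]; nra.
  rewrite nmulr_rge0 ?subr_lt0 //; apply/orP/idP => [[]|]; nra.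
- have {hab} : a != b by apply: contraNneq hab => ->.
  by rewrite mulrN1 oppr_ge0 subr_le0; case: ltgtP.
all: by rewrite ?mulN1r ?opprK ?subr_ge0 ?lexx.
Qed.

Lemma ccw_int_proj P Q w : 0 < wedge P Q -> w != 0 ->
  ccw_int (proj P) (proj Q) (proj w) = (0 <= wedge P w * wedge w Q).
Proof.
move=> hPQ hw; have hPQ0 : wedge P Q != 0 by rewrite gt_eqF.
have [p hp eP] := homog_proj (wedge_neq0l hPQ0).
have [q hq eQ] := homog_proj (wedge_neq0r hPQ0).
have [k hk eW] := homog_proj hw.
set x := proj P in eP *; set y := proj Q in eQ *; set z := proj w in eW *.
have hxy : x != y.
  by apply: contraNneq hPQ0 => exy; rewrite eP eQ exy wedgeZl wedgeZr wedgevv !mulr0.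
rewrite ccw_int_homog // -[in RHS](pmulr_rge0 _ hPQ).
have -> : wedge P Q * (wedge P w * wedge w Q) = (p * q * k) ^+ 2 *
    (wedge (homog x) (homog y) * (wedge (homog x) (homog z) * wedge (homog z) (homog y))).
  by rewrite eP eQ eW !wedgeZl !wedgeZr; ring.
by rewrite [in RHS]pmulr_rge0 // lt0r sqr_ge0 sqrf_eq0 !mulf_neq0.
Qed.

Definition arc P Q : P1 R -> bool :=
  if 0 < wedge P Q then ccw_int (proj P) (proj Q) else ccw_int (proj Q) (proj P).

Lemma arc_proj P Q w : wedge P Q != 0 -> w != 0 ->
  arc P Q (proj w) = (0 <= wedge P w * wedge w Q).
Proof.
move=> hPQ hw; rewrite /arc; case: ifP => hpos; first exact: ccw_int_proj.
rewrite ccw_int_proj // ?(wedgeC Q w) ?(wedgeC w P) ?mulrNN 1?mulrC //.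
by rewrite wedgeC oppr_gt0 lt_neqAle hPQ leNgt hpos.
Qed.

Lemma unitmx_mulmx_neq0 M v : M \in unitmx -> v != 0 -> M *m v != 0.
Proof. by move=> hM; apply: contraNneq => hMv; rewrite -(mulKmx hM v) hMv mulmx0. Qed.

(* Up to sign, [arc P Q] is the image of the cone spanned by [P] and [Q]. *)
Lemma arc_stable M P Q a b c d : wedge P Q != 0 -> M \in unitmx ->
  M *m P = a *: P + b *: Q -> M *m Q = c *: P + d *: Q ->
  0 <= a -> 0 <= b -> 0 <= c -> 0 <= d -> maps_into_itself M (arc P Q).
Proof.
move=> hPQ hM hP hQ ha hb hc hd x; rewrite -(proj_homog x).
have hw := homog_neq0 x; set w := homog x in hw *.
rewrite mob_proj // !arc_proj ?unitmx_mulmx_neq0 //.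
have ew := col2_decomp w hPQ; set al := _ / _ in ew; set be := _ / _ in ew.
have hMw : M *m w = (al * a + be * c) *: P + (al * b + be * d) *: Q.
  by rewrite ew mulmxDr -!scalemxAr hP hQ; apply: col2P; rewrite !mxE; ring.
have -> : wedge P w = be * wedge P Q by rewrite {1}ew wedge_combr wedgevv; ring.
have -> : wedge w Q = al * wedge P Q by rewrite {1}ew wedge_combl wedgevv; ring.
have -> : wedge P (M *m w) = (al * b + be * d) * wedge P Q by rewrite hMw wedge_combr wedgevv; ring.
have -> : wedge (M *m w) Q = (al * a + be * c) * wedge P Q by rewrite hMw wedge_combl wedgevv; ring.
set W := wedge P Q.
have hW : 0 < W * W by rewrite lt0r mulf_neq0 // -expr2 sqr_ge0.
move=> hab; have {}hab : 0 <= al * be.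
  by move: hab; rewrite mulrACA [be * al]mulrC (pmulr_lge0 _ hW).
rewrite mulrACA (pmulr_lge0 _ hW).
have -> : (al * b + be * d) * (al * a + be * c) =
  al ^+ 2 * (a * b) + al * be * (b * c + a * d) + be ^+ 2 * (c * d) by ring.
by rewrite !addr_ge0 // mulr_ge0 ?sqr_ge0 ?addr_ge0 // mulr_ge0.
Qed.

Lemma interval_exists_arc M N P Q :
  maps_into_itself M (arc P Q) -> maps_into_itself N (arc P Q) ->
  interval_exists M N (proj P) (proj Q).
Proof. by rewrite /arc /interval_exists; case: ifP => _ hM hN; right; [left | right]. Qed.

Lemma interval_existsC M N x y : interval_exists M N x y -> interval_exists M N y x.
Proof. by case=> [->|[]]; [left | right; right | right; left]. Qed.

Lemma interval_exists_sym M N x y : interval_exists M N x y -> interval_exists N M x y.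
Proof. by case=> [->|[[hM hN]|[hM hN]]]; [left | right; left | right; right]. Qed.

Lemma interval_exists_triangular M N P Q a b c d k :
  wedge P Q != 0 -> M \in unitmx -> N \in unitmx ->
  M *m P = a *: P -> M *m Q = b *: Q -> N *m P = c *: P + k *: Q -> N *m Q = d *: Q ->
  0 <= a -> 0 <= b -> 0 <= c -> 0 <= d -> interval_exists M N (proj P) (proj Q).
Proof.
move=> hPQ hM hN hMP hMQ hNP hNQ ha hb hc hd.
(* Replacing [Q] by [- Q] flips the sign of [k] and does not move [proj Q]. *)
wlog hk : Q k hPQ hMQ hNP hNQ / 0 <= k.
  move=> gen; have [hk|hk] := lerP 0 k; first exact: (gen Q k).
  have hN1 : (-1 : R) != 0 by rewrite oppr_eq0 oner_eq0.
  rewrite -(projZ Q hN1); apply: (gen _ (- k)); rewrite ?oppr_ge0 ?ltW //.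
  - by rewrite wedgeZr mulf_neq0.
  - by rewrite -scalemxAr hMQ !scalerA mulrC.
  - by rewrite hNP scalerA mulrNN mulr1.
  - by rewrite -scalemxAr hNQ !scalerA mulrC.
have hMP' : M *m P = a *: P + 0 *: Q by rewrite scale0r addr0.
have hMQ' : M *m Q = 0 *: P + b *: Q by rewrite scale0r add0r.
have hNQ' : N *m Q = 0 *: P + d *: Q by rewrite scale0r add0r.
apply: interval_exists_arc.
  exact: arc_stable hPQ hM hMP' hMQ' ha (lexx 0) (lexx 0) hb.
exact: arc_stable hPQ hN hNP hNQ' hc hk (lexx 0) hd.
Qed.

End ProjectiveLine.

Section SL2Eigen.
Variable R : realFieldType.
Implicit Types (M : 'M[R]_2) (v : 'cV[R]_2).

Lemma SL2_unitmx M : \det M = 1 -> M \in unitmx.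
Proof. by move=> hM; rewrite unitmxE hM unitr1. Qed.

Lemma SL2_eigenvalue M v a b : \det M = 1 -> \tr M = a + a^-1 -> a != 0 ->
  v != 0 -> M *m v = b *: v -> b = a \/ b = a^-1.
Proof.
move=> hdet htr ha hv /(eigenvalue_root hv); rewrite hdet htr => hb.
have : (b - a) * (b - a^-1) = 0 by rewrite -[RHS]hb; field.
by move/eqP; rewrite mulf_eq0 !subr_eq0 => /orP [] /eqP; [left | right].
Qed.

Lemma ge1_inv_bounds (a : R) : 1 <= a -> 0 < a^-1 <= 1.
Proof. by move=> ha; rewrite invr_gt0 invf_le1 ?(lt_le_trans ltr01). Qed.

Lemma attracting_eigen M v a : \det M = 1 -> \tr M = a + a^-1 -> 1 <= a ->
  v != 0 -> M *m v = a *: v -> attracting M (proj v).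
Proof.
move=> hdet htr ha hv hMv; exists v, a; split => // w b hw hMw.
have /andP [ai0 ai1] := ge1_inv_bounds ha.
have [->|->] := SL2_eigenvalue hdet htr (lt0r_neq0 (lt_le_trans ltr01 ha)) hw hMw => //.
by rewrite !ger0_norm ?(le_trans ai1) ?(ltW ai0) ?(le_trans ler01).
Qed.

Lemma repelling_eigen M v a : \det M = 1 -> \tr M = a + a^-1 -> 1 <= a ->
  v != 0 -> M *m v = a^-1 *: v -> repelling M (proj v).
Proof.
move=> hdet htr ha hv hMv; exists v, a^-1; split => // w b hw hMw.
have /andP [ai0 ai1] := ge1_inv_bounds ha.
have [->|->] := SL2_eigenvalue hdet htr (lt0r_neq0 (lt_le_trans ltr01 ha)) hw hMw => //.
by rewrite !ger0_norm ?(le_trans ai1) ?(ltW ai0) ?(le_trans ler01).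
Qed.

Lemma invmx_SL2 M a : \det M = 1 -> \tr M = a + a^-1 ->
  \det (invmx M) = 1 /\ \tr (invmx M) = a + a^-1.
Proof. by move=> hdet htr; rewrite det_inv hdet invr1 mxtrace_invmx_det1. Qed.

Lemma attracting_invmx M v a : \det M = 1 -> \tr M = a + a^-1 -> 1 <= a ->
  v != 0 -> M *m v = a^-1 *: v -> attracting (invmx M) (proj v).
Proof.
move=> hdet htr ha hv hMv; have [hdet' htr'] := invmx_SL2 hdet htr.
apply: (attracting_eigen hdet' htr' ha hv).
have ha0 : a^-1 != 0 by rewrite invr_eq0 lt0r_neq0 // (lt_le_trans ltr01 ha).
by rewrite (invmx_eigen (SL2_unitmx hdet) ha0 hMv) invrK.
Qed.

Lemma repelling_invmx M v a : \det M = 1 -> \tr M = a + a^-1 -> 1 <= a ->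
  v != 0 -> M *m v = a *: v -> repelling (invmx M) (proj v).
Proof.
move=> hdet htr ha hv hMv; have [hdet' htr'] := invmx_SL2 hdet htr.
apply: (repelling_eigen hdet' htr' ha hv).
have ha0 : a != 0 by rewrite lt0r_neq0 // (lt_le_trans ltr01 ha).
exact: invmx_eigen (SL2_unitmx hdet) ha0 hMv.
Qed.

Lemma SL2_inv_eigenvector M a : \det M = 1 -> \tr M = a + a^-1 -> a != 0 ->
  M != a^-1%:M -> exists2 v : 'cV_2, v != 0 & M *m v = a^-1 *: v.
Proof.
move=> hdet htr ha hM; have : a^-1 ^+ 2 - \tr M * a^-1 + \det M = 0.
  by rewrite hdet htr; field.
by case/root_eigenvector => [/eqP|//]; rewrite (negbTE hM).
Qed.

End SL2Eigen.

Section CoherentOrientation.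
Variable R : realFieldType.
Implicit Types (M N : 'M[R]_2) (u v P Q : 'cV[R]_2).

Lemma triangular_not_scalar M P Q a x : wedge P Q != 0 -> M != 1%:M -> 0 < a ->
  M *m P = a^-1 *: P -> M *m Q = x *: P + a *: Q -> a = a^-1 -> a = 1 /\ x != 0.
Proof.
move=> hPQ hM1 ha hMP hMQ ea.
have a1 : a = 1.
  have aa : a * a = 1 by rewrite {2}ea mulfV // gt_eqF.
  nra.
split => //; apply: contraNneq hM1 => hx; apply/eqP/(scalar_mx_basis hPQ).
  by rewrite hMP a1 invr1.
by rewrite hMQ hx scale0r add0r a1.
Qed.

Lemma interval_exists_common_repeller M N P Q a b x :
  \det M = 1 -> \det N = 1 -> M != 1%:M -> wedge P Q != 0 -> 1 <= a -> 1 <= b ->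
  M *m P = a^-1 *: P -> M *m Q = x *: P + a *: Q -> N *m P = b^-1 *: P ->
  exists u, [/\ u != 0, M *m u = a *: u & interval_exists M (invmx N) (proj u) (proj P)].
Proof.
move=> hM hN hM1 hPQ ha hb hMP hMQ hNP.
have ha0 : 0 < a := lt_le_trans ltr01 ha; have hb0 : 0 < b := lt_le_trans ltr01 hb.
have /andP [ai0 _] := ge1_inv_bounds ha; have /andP [bi0 _] := ge1_inv_bounds hb.
have hMu := triangular_eigenvector hMP hMQ.
exists (x *: P + (a - a^-1) *: Q); set u := _ + _ in hMu *.
have [ea|nea] := eqVneq a a^-1.
  have [a1 hx] := triangular_not_scalar hPQ hM1 ha0 hMP hMQ ea.
  have eu : u = x *: P by rewrite /u a1 invr1 subrr scale0r addr0.
  rewrite eu in hMu *; rewrite scaler_eq0 negb_or hx (wedge_neq0l hPQ) projZ //.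
  by split => //; left.
have huP : wedge u P != 0.
  by rewrite /u wedge_combl wedgevv mulr0 add0r wedgeC mulrN oppr_eq0 mulf_neq0 // subr_eq0.
split => //; first exact: wedge_neq0l huP.
have hNi : \det (invmx N) = 1 by rewrite det_inv hN invr1.
have hNiP : invmx N *m P = b *: P.
  by rewrite (invmx_eigen (SL2_unitmx hN) _ hNP) ?invrK // gt_eqF.
have hPu : wedge P u != 0 by rewrite wedgeC oppr_eq0.
have [c hNiu] := det1_triangular hNi (lt0r_neq0 hb0) hPu hNiP; rewrite addrC in hNiu.
exact: (interval_exists_triangular huP (SL2_unitmx hM) (SL2_unitmx hNi) hMu hMP hNiu hNiP
  (ltW ha0) (ltW ai0) (ltW bi0) (ltW hb0)).
Qed.

Lemma interval_exists_small_product M N P Q a b x y :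
  \det M = 1 -> \det N = 1 -> M != 1%:M -> wedge P Q != 0 -> 1 <= a -> 1 <= b ->
  M *m P = a^-1 *: P -> M *m Q = x *: P + a *: Q ->
  N *m P = b *: P + y *: Q -> N *m Q = b^-1 *: Q ->
  x * y <= (a - a^-1) * (b - b^-1) ->
  exists u, [/\ u != 0, M *m u = a *: u & interval_exists M (invmx N) (proj u) (proj Q)].
Proof.
move=> hM hN hM1 hPQ ha hb hMP hMQ hNP hNQ hxy.
have ha0 : 0 < a := lt_le_trans ltr01 ha; have hb0 : 0 < b := lt_le_trans ltr01 hb.
have /andP [ai0 _] := ge1_inv_bounds ha; have /andP [bi0 _] := ge1_inv_bounds hb.
have hMu := triangular_eigenvector hMP hMQ.
exists (x *: P + (a - a^-1) *: Q); set u := _ + _ in hMu *.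
have [x0|nx0] := eqVneq x 0.
  have nea : a - a^-1 != 0.
    rewrite subr_eq0; apply/negP => /eqP ea.
    by have [_] := triangular_not_scalar hPQ hM1 ha0 hMP hMQ ea; rewrite x0 eqxx.
  have eu : u = (a - a^-1) *: Q by rewrite /u x0 scale0r add0r.
  rewrite eu in hMu *; rewrite scaler_eq0 negb_or nea (wedge_neq0r hPQ) projZ //.
  by split => //; left.
have huQ : wedge u Q != 0 by rewrite /u wedge_combl wedgevv mulr0 addr0 mulf_neq0.
split => //; first exact: wedge_neq0l huQ.
have hNi : \det (invmx N) = 1 by rewrite det_inv hN invr1.
have hNiQ : invmx N *m Q = 0 *: u + b *: Q.
  by rewrite scale0r add0r (invmx_eigen (SL2_unitmx hN) _ hNQ) ?invrK // invr_eq0 gt_eqF.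
(* The bound on [x * y] is exactly the nonnegativity of the [Q]-coordinate. *)
have hNiu : invmx N *m u = b^-1 *: u + ((a - a^-1) * (b - b^-1) - x * y) *: Q.
  set k := _ - _; rewrite -[in LHS](_ : N *m (b^-1 *: u + k *: Q) = u) ?mulKmx ?SL2_unitmx //.
  rewrite mulmxDr -!scalemxAr /u mulmxDr -!scalemxAr hNP hNQ.
  by apply: col2P; rewrite !mxE /k; field; rewrite !gt_eqF.
have hMu' : M *m u = a *: u + 0 *: Q by rewrite scale0r addr0.
have hMQ' : M *m Q = 1 *: u + a^-1 *: Q.
  by rewrite hMQ /u scale1r; apply: col2P; rewrite !mxE; ring.
apply: interval_exists_arc.
  exact: arc_stable huQ (SL2_unitmx hM) hMu' hMQ' (ltW ha0) (lexx 0) ler01 (ltW ai0).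
apply: (arc_stable huQ (SL2_unitmx hNi) hNiu hNiQ (ltW bi0) _ (lexx 0) (ltW hb0)).
by rewrite subr_ge0.
Qed.

Lemma coherently_oriented_invmx M N a b u p q v :
  \det M = 1 -> \det N = 1 -> \tr M = a + a^-1 -> \tr N = b + b^-1 -> 1 <= a -> 1 <= b ->
  u != 0 -> p != 0 -> q != 0 -> v != 0 ->
  M *m u = a *: u -> M *m p = a^-1 *: p -> N *m q = b^-1 *: q -> N *m v = b *: v ->
  interval_exists M (invmx N) (proj u) (proj q) ->
  interval_exists N (invmx M) (proj v) (proj p) ->
  coherently_oriented M (invmx N).
Proof.
move=> hM hN htM htN ha hb hu hp hq hv hMu hMp hNq hNv Iplus Iminus.
exists (proj u), (proj p), (proj q), (proj v); split.
  split; [exact: attracting_eigen hM htM ha hu hMu | exact: repelling_eigen hM htM ha hp hMp |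
          exact: attracting_invmx hN htN hb hq hNq | exact: repelling_invmx hN htN hb hv hNv].
by split; rewrite ?invmxK; last by apply/interval_existsC/interval_exists_sym.
Qed.

End CoherentOrientation.

Definition wordmx (R : pzRingType) n (A B : 'M[R]_n) (w : word) : 'M[R]_n :=
  foldr (fun c M => (if c then B else A) *m M) 1%:M w.

Lemma wordmx_cat (R : pzRingType) n (A B : 'M[R]_n) u v :
  wordmx A B (u ++ v) = wordmx A B u *m wordmx A B v.
Proof. by elim: u => [|c u IH] /=; rewrite ?mul1mx // IH mulmxA. Qed.

Section PositiveInBasis.
Variable R : realFieldType.
Variables (p q : 'cV[R]_2).

Definition pos_in_basis (Y : 'M[R]_2) := exists a b c d,
  [/\ 0 < a, 0 <= b, 0 <= c, 0 <= d & Y *m p = a *: p + b *: q /\ Y *m q = c *: p + d *: q].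

Lemma pos_in_basis1 : pos_in_basis 1%:M.
Proof. by exists 1, 0, 0, 1; rewrite !mul1mx !scale0r addr0 add0r !scale1r. Qed.

Lemma pos_in_basisM Y Z : pos_in_basis Y -> pos_in_basis Z -> pos_in_basis (Y *m Z).
Proof.
move=> [a [b [c [d [ha hb hc hd [hYp hYq]]]]]] [a' [b' [c' [d' [ha' hb' hc' hd' [hZp hZq]]]]]].
exists (a' * a + b' * c), (a' * b + b' * d), (c' * a + d' * c), (c' * b + d' * d).
split; first exact: ltr_wpDr (mulr_ge0 hb' hc) (mulr_gt0 ha' ha).
all: try by rewrite addr_ge0 ?mulr_ge0 ?(ltW ha) ?(ltW ha').
by split; rewrite -mulmxA (hZp, hZq) mulmxDr -!scalemxAr hYp hYq; apply: col2P; rewrite !mxE; ring.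
Qed.

Lemma pos_in_basis_wordmx A B w :
  pos_in_basis A -> pos_in_basis B -> pos_in_basis (wordmx A B w).
Proof.
move=> hA hB; elim: w => [|c w IH] /=; first exact: pos_in_basis1.
by apply: pos_in_basisM => //; case: c.
Qed.

Lemma pos_in_basis_tr_gt0 Y : wedge p q != 0 -> pos_in_basis Y -> 0 < \tr Y.
Proof.
move=> hpq [a [b [c [d [ha _ _ hd [hYp hYq]]]]]].
by rewrite (mxtrace_basis hpq hYp hYq); exact: ltr_wpDr hd ha.
Qed.

End PositiveInBasis.

Lemma hyperbolic_bound (R : realFieldType) (l m z : R) : 1 <= l -> 1 <= m ->
  3 <= l + l^-1 -> l + l^-1 + 1 <= m + m^-1 -> (l - l^-1) * (m - m^-1) < z ->
  l ^+ 2 - l * m^-1 <= z.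
Proof.
move=> hl hm ht hts hz.
have /andP [li0 li1] := ge1_inv_bounds hl; have /andP [mi0 mi1] := ge1_inv_bounds hm.
have hll : l * l^-1 = 1 by rewrite mulfV // gt_eqF // (lt_le_trans ltr01).
have hmm : m * m^-1 = 1 by rewrite mulfV // gt_eqF // (lt_le_trans ltr01).
set li := l^-1 in li0 li1 hll ht hts hz *; set mi := m^-1 in mi0 mi1 hmm hts hz *.
(* (l - li)(m - mi) - (l^2 - l mi) = m (l - li) - l^2 + li mi and m >= l + li + 1/2. *)
have hl2 : 2 <= l by lra.
have hmi : mi <= 1/2 by nra.
have hli : li <= 1/2 by nra.
have hmli : (l + li + 1/2) * (l - li) <= m * (l - li) by rewrite ler_wpM2r //; lra.
nra.
Qed.

Section WellOriented.
Variable R : realFieldType.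
Variables (A B : 'M[R]_2) (l m : R).
Hypotheses (hdA : \det A = 1) (hdB : \det B = 1) (hl : 1 <= l) (hm : 1 <= m)
  (htA : \tr A = l + l^-1) (htB : \tr B = m + m^-1) (hAB : A *m B != B *m A).
Implicit Types (p q : 'cV[R]_2).

Lemma l_neq0 : l != 0. Proof. exact: lt0r_neq0 (lt_le_trans ltr01 hl). Qed.
Lemma m_neq0 : m != 0. Proof. exact: lt0r_neq0 (lt_le_trans ltr01 hm). Qed.

Lemma noncommuting_not_scalar c : A != c%:M /\ B != c%:M.
Proof. by split; apply: contraNneq hAB => ->; rewrite scalar_mxC. Qed.

Lemma coherent_of_common_repeller p : p != 0 ->
  A *m p = l^-1 *: p -> B *m p = m^-1 *: p -> coherently_oriented A (invmx B).
Proof.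
move=> hp hAp hBp; have [r hpr] := exists_wedge_neq0 hp.
have [[hA1 _] [_ hB1]] := (noncommuting_not_scalar 1, noncommuting_not_scalar 1).
have [x] := det1_triangular hdA (invr_neq0 l_neq0) hpr hAp; rewrite invrK => hAr.
have [z] := det1_triangular hdB (invr_neq0 m_neq0) hpr hBp; rewrite invrK => hBr.
have [u [hu hAu Iplus]] := interval_exists_common_repeller hdA hdB hA1 hpr hl hm hAp hAr hBp.
have [v [hv hBv Iminus]] := interval_exists_common_repeller hdB hdA hB1 hpr hm hl hBp hBr hAp.
exact: (coherently_oriented_invmx hdA hdB htA htB hl hm hu hp hp hv hAu hAp hBp hBv Iplus Iminus).
Qed.

Lemma coherent_of_small_product p q x y : wedge p q != 0 ->
  A *m p = l^-1 *: p -> A *m q = x *: p + l *: q ->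
  B *m p = m *: p + y *: q -> B *m q = m^-1 *: q ->
  x * y <= (l - l^-1) * (m - m^-1) -> coherently_oriented A (invmx B).
Proof.
move=> hpq hAp hAq hBp hBq hxy.
have [[hA1 _] [_ hB1]] := (noncommuting_not_scalar 1, noncommuting_not_scalar 1).
have [u [hu hAu Iplus]] :=
  interval_exists_small_product hdA hdB hA1 hpq hl hm hAp hAq hBp hBq hxy.
have hqp : wedge q p != 0 by rewrite wedgeC oppr_eq0.
rewrite addrC in hAq; rewrite addrC in hBp; rewrite mulrC [_ * (m - _)]mulrC in hxy.
have [v [hv hBv Iminus]] :=
  interval_exists_small_product hdB hdA hB1 hqp hm hl hBq hBp hAq hAp hxy.
exact: coherently_oriented_invmx hdA hdB htA htB hl hm hu (wedge_neq0l hpq)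
  (wedge_neq0r hpq) hv hAu hAp hBq hBv Iplus Iminus.
Qed.

Lemma SL2_pair_normal_form : ~ coherently_oriented A (invmx B) ->
  exists p q x y, [/\ wedge p q != 0, A *m p = l^-1 *: p, A *m q = x *: p + l *: q,
    B *m p = m *: p + y *: q & B *m q = m^-1 *: q] /\
    [/\ 0 < x, 0 < y & (l - l^-1) * (m - m^-1) < x * y].
Proof.
move=> hnc.
have [p hp hAp] := SL2_inv_eigenvector hdA htA l_neq0 (noncommuting_not_scalar _).1.
have [q hq hBq] := SL2_inv_eigenvector hdB htB m_neq0 (noncommuting_not_scalar _).2.
have [/wedge_eq0_scale/(_ hq) [k ek]|hpq] := eqVneq (wedge p q) 0.
  case: hnc; apply: (coherent_of_common_repeller hp hAp).
  by rewrite ek -scalemxAr hBq !scalerA mulrC.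
have hqp : wedge q p != 0 by rewrite wedgeC oppr_eq0.
have [x] := det1_triangular hdA (invr_neq0 l_neq0) hpq hAp; rewrite invrK => hAq.
have [y] := det1_triangular hdB (invr_neq0 m_neq0) hqp hBq; rewrite invrK addrC => hBp.
have [hxy|hxy] := lerP (x * y) ((l - l^-1) * (m - m^-1)).
  by case: hnc; exact: coherent_of_small_product hpq hAp hAq hBp hBq hxy.
have /andP [_ li1] := ge1_inv_bounds hl; have /andP [_ mi1] := ge1_inv_bounds hm.
have hxy0 : 0 < x * y.
  by apply: le_lt_trans hxy; rewrite mulr_ge0 // subr_ge0 (le_trans _ hl, le_trans _ hm).
have [hx|hx] := ltrP 0 x.
  by exists p, q, x, y; split; split; rewrite // -(pmulr_rgt0 _ hx).
have hx0 : x < 0.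
  by rewrite lt_neqAle hx andbT; apply: contraTneq hxy0 => ->; rewrite mul0r ltxx.
exists p, (- q), (- x), (- y); split; split; rewrite ?mulrNN ?oppr_gt0 //.
- by rewrite wedgeNr oppr_eq0.
- by rewrite mulmxN hAq opprD scaleNr scalerN.
- by rewrite scaleNr scalerN opprK.
- by rewrite mulmxN hBq scalerN.
- by rewrite -(nmulr_rgt0 _ hx0).
Qed.

Hypothesis htAB : \tr A + 1 <= \tr B.

Section NormalForm.
Variables (p q : 'cV[R]_2) (x y : R).
Hypotheses (hpq : wedge p q != 0) (hAp : A *m p = l^-1 *: p) (hAq : A *m q = x *: p + l *: q)
  (hBp : B *m p = m *: p + y *: q) (hBq : B *m q = m^-1 *: q) (hx : 0 < x) (hy : 0 < y).

Lemma pos_in_basis_A : pos_in_basis p q A.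
Proof.
have /andP [li0 _] := ge1_inv_bounds hl.
by exists l^-1, 0, x, l; rewrite scale0r addr0 (ltW hx) (le_trans ler01 hl).
Qed.

Lemma pos_in_basis_B : pos_in_basis p q B.
Proof.
have /andP [mi0 _] := ge1_inv_bounds hm.
by exists m, y, 0, m^-1; rewrite scale0r add0r (ltW hy) (ltW mi0) (lt_le_trans ltr01 hm).
Qed.

Lemma mxtrace_mulAB : \tr (A *m B) = m * l^-1 + x * y + m^-1 * l.
Proof.
have hABp : A *m B *m p = (m * l^-1 + y * x) *: p + (y * l) *: q.
  rewrite -mulmxA hBp mulmxDr -!scalemxAr hAp hAq; apply: col2P; rewrite !mxE; ring.
have hABq : A *m B *m q = (m^-1 * x) *: p + (m^-1 * l) *: q.
  rewrite -mulmxA hBq -!scalemxAr hAq; apply: col2P; rewrite !mxE; ring.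
by rewrite (mxtrace_basis hpq hABp hABq) mulrC [y * x]mulrC; ring.
Qed.

Lemma pos_in_basis_swap : l ^+ 2 - l * m^-1 <= x * y -> pos_in_basis p q ((B - A) *m A).
Proof.
move=> hxy; have /andP [li0 li1] := ge1_inv_bounds hl; have /andP [mi0 mi1] := ge1_inv_bounds hm.
have hmli : l <= m - l^-1 by rewrite lerBrDr; move: htAB; rewrite htA htB; lra.
exists (l^-1 * (m - l^-1)), (l^-1 * y), (x * (m - l^-1 - l)), (x * y + l * m^-1 - l ^+ 2).
split; first by rewrite mulr_gt0 // (lt_le_trans (lt_le_trans ltr01 hl) hmli).
- by rewrite mulr_ge0 ?ltW.
- by rewrite mulr_ge0 ?(ltW hx) ?subr_ge0.
- by rewrite -addrA -opprB subr_ge0.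
split.
  rewrite -mulmxA hAp -scalemxAr mulmxBl hBp hAp; apply: col2P; rewrite !mxE; ring.
rewrite -mulmxA hAq mulmxDr -!scalemxAr !mulmxBl hBp hAp hBq hAq.
by apply: col2P; rewrite !mxE; ring.
Qed.

Lemma swap_bound : (\tr A = 2 \/ 3 <= \tr A) ->
  (0 < \tr (A *m B) - \tr B -> 1 <= \tr (A *m B) - \tr B) ->
  (l - l^-1) * (m - m^-1) < x * y -> l ^+ 2 - l * m^-1 <= x * y.
Proof.
have /andP [mi0 _] := ge1_inv_bounds hm.
case=> [htA2|htA3] hint hxy; last by apply: hyperbolic_bound; rewrite -?htA -?htB.
(* For [l = 1], [\tr (A *m B) - \tr B = x * y] is a positive integer. *)
have l1 : l = 1.
  have : (l - 1) ^+ 2 = l * (\tr A - 2).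
    by rewrite htA; field; exact: l_neq0.
  by rewrite htA2 subrr mulr0 => /eqP; rewrite sqrf_eq0 subr_eq0 => /eqP.
move: hxy hint; rewrite mxtrace_mulAB htB l1 invr1 subrr mul0r !mulr1 mul1r => hxy.
have -> : m + x * y + m^-1 - (m + m^-1) = x * y by ring.
move/(_ hxy); lra.
Qed.

End NormalForm.

Lemma trace_swap_gt0 : (\tr A = 2 \/ 3 <= \tr A) ->
  (0 < \tr (A *m B) - \tr B -> 1 <= \tr (A *m B) - \tr B) ->
  ~ coherently_oriented A (invmx B) ->
  forall w, 0 < \tr ((B - A) *m A *m wordmx A B w).
Proof.
move=> htA23 hint hnc w.
have [p [q [x [y [[hpq hAp hAq hBp hBq] [hx hy hxy]]]]]] := SL2_pair_normal_form hnc.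
apply: (pos_in_basis_tr_gt0 hpq); apply: pos_in_basisM.
  exact: pos_in_basis_swap hAp hAq hBp hBq hx hy (swap_bound hpq hAp hAq hBp hBq htA23 hint hxy).
exact: pos_in_basis_wordmx (pos_in_basis_A hAp hAq hx) (pos_in_basis_B hBp hBq hy).
Qed.

End WellOriented.

Lemma exists_plus_inv (R : rcfType) (t : R) : 2 <= t -> exists2 l, 1 <= l & l + l^-1 = t.
Proof.
move=> ht; set s := Num.sqrt (t ^+ 2 - 4).
have hs : 0 <= s := sqrtr_ge0 _.
have hs2 : s ^+ 2 = t ^+ 2 - 4 by rewrite sqr_sqrtr //; nra.
have hts : t + s != 0 by rewrite gt_eqF //; lra.
exists ((t + s) / 2); first lra.
have -> : ((t + s) / 2)^-1 = (t - s) / 2.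
  rewrite invf_div; apply: (@mulIf _ (t + s)) => //; rewrite divfK //.
  by rewrite mulrAC -subr_sqr hs2; field.
by field.
Qed.

Lemma mxtrace_wordmx_swap (R : comPzRingType) n (A B : 'M[R]_n) u v :
  \tr (wordmx A B (u ++ [:: lb; la] ++ v)) - \tr (wordmx A B (u ++ [:: la; la] ++ v)) =
  \tr ((B - A) *m A *m wordmx A B (v ++ u)).
Proof.
rewrite !wordmx_cat /= !mulmx1 -raddfB /= -mulmxBr -mulmxBl -mulmxBl.
by rewrite mxtrace_mulC !mulmxA.
Qed.

Lemma trw_toR (A B : 'M[int]_2) w :
  (trw A B w)%:~R = \tr (wordmx (toR A) (toR B) w) :> Rdefinitions.R.
Proof.
rewrite /trw -trace_map_mx; congr (\tr _).
by elim: w => [|c w IH] /=; rewrite ?map_mx1 // map_mxM IH; case: c.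
Qed.

Lemma toR_commute (A B : 'M[int]_2) : A *m B != B *m A -> toR A *m toR B != toR B *m toR A.
Proof.
apply: contraNneq => e; apply/eqP/matrixP => i j; move/matrixP/(_ i j): e.
by rewrite /toR -!map_mxM !mxE => /eqP; rewrite eqr_int => /eqP.
Qed.

Lemma mxtrace_toR (M : 'M[int]_2) : \tr (toR M) = (\tr M)%:~R.
Proof. exact: trace_map_mx. Qed.

Lemma det_toR (M : 'M[int]_2) : \det M = 1 -> \det (toR M) = 1.
Proof. by move=> hM; rewrite det_map_mx hM rmorph1. Qed.

Lemma toR_trace_integrality (A B : 'M[int]_2) : 2 <= \tr A -> \tr A < \tr B -> [/\
  \tr (toR A) = 2 \/ 3 <= \tr (toR A), \tr (toR A) + 1 <= \tr (toR B) &
  0 < \tr (toR A *m toR B) - \tr (toR B) -> 1 <= \tr (toR A *m toR B) - \tr (toR B)].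
Proof.
move=> htA htAB; rewrite /toR -map_mxM !mxtrace_toR; split.
- have [->|ne2] := eqVneq (\tr A) 2; [by left | right].
  by rewrite (_ : 3 = 3%:~R) // ler_int; lia.
- by rewrite -(rmorph1 (intr : int -> _)) -rmorphD ler_int; lia.
- by rewrite -rmorphB ltr0z ler1z; lia.
Qed.

Theorem lemma5p5 (A B : 'M[int]_2) :
  \det A = 1 -> \det B = 1 ->
  A *m B != B *m A ->
  well_oriented (toR A) (toR B) ->
  2 <= \tr A -> \tr A < \tr B ->
  forall (n : nat), (1 <= n)%N ->
  forall w : word, size w = n ->
    (forall u : word, size u = n -> trw A B u <= trw A B w) ->
    ~~ infix [:: la; la] w.
Proof.
move=> hdA hdB hAB [_ hwo] htA htAB n _ w hw hmax; apply/negP => /infixP [u [v ew]].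
have hsize : size (u ++ [:: lb; la] ++ v) = n by rewrite -hw ew !size_cat.
have := hmax _ hsize; apply/negP; rewrite -ltNge -(ltr_int Rdefinitions.R) -subr_gt0.
rewrite !trw_toR ew mxtrace_wordmx_swap.
have [l hl htl] : exists2 l : Rdefinitions.R, 1 <= l & l + l^-1 = \tr (toR A).
  by apply: exists_plus_inv; rewrite mxtrace_toR (_ : 2 = 2%:~R) // ler_int.
have [m hm htm] : exists2 m : Rdefinitions.R, 1 <= m & m + m^-1 = \tr (toR B).
  by apply: exists_plus_inv; rewrite mxtrace_toR (_ : 2 = 2%:~R) // ler_int; lia.
have [htA23 htAB' hint] := toR_trace_integrality htA htAB.
exact (trace_swap_gt0 (det_toR hdA) (det_toR hdB) hl hm (esym htl) (esym htm)
  (toR_commute hAB) htAB' htA23 hint hwo (v ++ u)).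
Qed.
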